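(* Assume (ER ra). Then $\sigma^+_{ra}:=-\sum_{j=1}^M\beta_j\mathrm{Tr}(\rho^{ra}_+\Phi_j)=0$ if and only if $U_j(\rho^{ra}_+\otimes\rho_{\mathcal E_j})U_j^*=\rho^{ra}_+\otimes\rho_{\mathcal E_j}$ for all $j\in\{1,\dots,M\}$; in that case in particular $\mathcal L_j(\rho^{ra}_+)=\rho^{ra}_+$ for all $j$.
   Context: Finite-dimensional $\mathcal H_{\mathcal S},\mathcal H_{\mathcal E_j}$ ($j=1..M$), self-adjoint $H_{\mathcal S},H_{\mathcal E_j}$, self-adjoint $V_j$ on $\mathcal H_{\mathcal S}\otimes\mathcal H_{\mathcal E_j}$, $\tau_j>0$, $T=\sum\tau_j$, $U_j=e^{-i\tau_j(H_{\mathcal S}\otimes\mathrm{Id}+\mathrm{Id}\otimes H_{\mathcal E_j}+V_j)}$. Fixed inverse temperatures $\beta_j$ (of the form $\beta_{\rm ref}-\zeta_j$, $\boldsymbol\zeta\in\mathbb R^M$), $\rho_{\mathcal E_j}=e^{-\beta_jH_{\mathcal E_j}}/\mathrm{Tr}(e^{-\beta_jH_{\mathcal E_j}})$, $\mathcal L_j(\rho)=\mathrm{Tr}_{\mathcal H_{\mathcal E_j}}(U_j(\rho\otimes\rho_{\mathcal E_j})U_j^* )$, $\mathcal L_{ra}=\frac1M\sum_j\mathcal L_j$. Primitive CP map: for some $n$, products of $n$ Kraus operators span all operators. (ER ra): $\mathcal L_{ra}$ is primitive for some choice of $\boldsymbol\zeta$ (equivalently, for all); $\rho^{ra}_+$ denotes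 the unique invariant state of $\mathcal L_{ra}$. Flux observable $\Phi_j=-\frac1T\mathrm{Tr}_{\mathcal H_{\mathcal E_j}}((\mathrm{Id}\otimes\rho_{\mathcal E_j})(U_j^*(\mathrm{Id}\otimes H_{\mathcal E_j})U_j-\mathrm{Id}\otimes H_{\mathcal E_j}))$. *)

From HB Require Import structures.
From mathcomp Require Import all_boot all_order all_algebra.
From mathcomp Require Import all_classical all_reals all_analysis.
From mathcomp Require Import complex mxtens.

Set Implicit Arguments.
Unset Strict Implicit.
Unset Printing Implicit Defensive.

Import Order.TTheory GRing.Theory Num.Theory.
Local Open Scope ring_scope.
Local Open Scope complex_scope.

Section QuantumDefs.
Variable R : realType.
Local Notation C := R[i].

Definition adjmx m n (A : 'M[C]_(m, n)) : 'M[C]_(n, m) := (map_mx conjc A)^T.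

Definition selfadjoint n (A : 'M[C]_n) : Prop := adjmx A = A.

Definition psdmx n (A : 'M[C]_n) : Prop :=
  selfadjoint A /\ forall v : 'cV[C]_n, 0 <= (adjmx v *m A *m v) 0 0.

Definition density n (rho : 'M[C]_n) : Prop := psdmx rho /\ \tr rho = 1.

Definition expmx n (A : 'M[C]_n) : 'M[C]_n :=
  limn (series (fun k : nat => (k`!%:R)^-1 *: A ^+ k)).

(* partial trace over the second tensor factor of C^m (x) C^n, with the
   Kronecker indexing convention of [tensmx] ((i,j) |-> i*n + j) *)
Definition ptrace2 m n (X : 'M[C]_(m * n)) : 'M[C]_m :=
  \matrix_(i < m, k < m) \sum_(l < n) X (mxtens_index (i, l)) (mxtens_index (k, l)).

Definition gibbs n (beta : R) (H : 'M[C]_n) : 'M[C]_n :=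
  (\tr (expmx (- beta%:C *: H)))^-1 *: expmx (- beta%:C *: H).

Definition Uint dS dE (HS : 'M[C]_dS) (HE : 'M[C]_dE) (V : 'M[C]_(dS * dE))
  (tau : R) : 'M[C]_(dS * dE) :=
  expmx (- ('i * tau%:C) *: (HS *t (1%:M : 'M[C]_dE) + (1%:M : 'M[C]_dS) *t HE + V)).

Definition Lrep dS dE (HS : 'M[C]_dS) (HE : 'M[C]_dE) (V : 'M[C]_(dS * dE))
  (tau beta : R) (rho : 'M[C]_dS) : 'M[C]_dS :=
  let U := Uint HS HE V tau in
  ptrace2 (U *m (rho *t gibbs beta HE) *m adjmx U).

Definition Lra (M dS : nat) (dE : 'I_M -> nat) (HS : 'M[C]_dS)
  (HE : forall j, 'M[C]_(dE j)) (V : forall j, 'M[C]_(dS * dE j))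
  (tau beta : 'I_M -> R) (rho : 'M[C]_dS) : 'M[C]_dS :=
  (M%:R)^-1 *: \sum_(j < M) Lrep HS (HE j) (V j) (tau j) (beta j) rho.

Definition flux dS dE (HS : 'M[C]_dS) (HE : 'M[C]_dE) (V : 'M[C]_(dS * dE))
  (tau beta T : R) : 'M[C]_dS :=
  let U := Uint HS HE V tau in
  let IHE := (1%:M : 'M[C]_dS) *t HE in
  - (T%:C)^-1 *: ptrace2 (((1%:M : 'M[C]_dS) *t gibbs beta HE)
                            *m (adjmx U *m IHE *m U - IHE)).

(* primitive CP map: it has a Kraus representation L(X) = sum_a K_a X K_a^*
   and for some n the products of n Kraus operators span all operators *)
Definition primitive d (L : 'M[C]_d -> 'M[C]_d) : Prop :=
  exists (r : nat) (K : 'I_r -> 'M[C]_d),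
    (forall X, L X = \sum_(a < r) K a *m X *m adjmx (K a)) /\
    exists n : nat, forall X : 'M[C]_d,
      exists c : n.-tuple 'I_r -> C,
        X = \sum_(s : n.-tuple 'I_r) c s *: \prod_(a <- s) K a.

End QuantumDefs.

(* Diagonalise rho = sum_i p_i |i><i| and H_{E_j} = sum_k h_k |k><k|.  Then
   rho (x) rho_{E_j} is diagonal in the product basis, with weights
   b_j(i,k) = p_i e^{-beta_j h_k} / Z_j, and U_j induces the doubly stochastic
   matrix g_j(c,a) = |<c|U_j|a>|^2.  Invariance of rho under L_ra says that
   sum_j sum_k (g_j b_j)(i,k) = M p_i; with ln b_j = ln p + ln rho_{E_j} this
   turns T sigma = sum_j beta_j (energy change of reservoir j) into
     sum_j sum_{c,a} g_j(c,a) (b_a (ln b_a - ln b_c) - b_a + b_c),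
   a sum of nonnegative relative-entropy terms.  Hence sigma = 0 forces b_j to
   be constant along every transition of U_j, i.e. U_j commutes with
   rho (x) rho_{E_j}; conversely such commutation kills every energy change, and
   tracing out the reservoir gives L_j(rho) = rho. *)

From HB Require Import structures.
From mathcomp Require Import all_boot all_order all_algebra.
From mathcomp Require Import all_classical all_reals all_analysis.
From mathcomp Require Import complex mxtens.
From mathcomp Require Import spectral sesquilinear.
From mathcomp Require Import ring lra.
Import Order.TTheory GRing.Theory Num.Theory.
Local Open Scope ring_scope.
Local Open Scope complex_scope.
Set Implicit Arguments.
Unset Strict Implicit.
Unset Printing Implicit Defensive.
Import numFieldTopology.Exports.

(* C = R[i] as a normed module over itself, so that series of complex
   matrices have limits. *)
HB.instance Definition _ (R : realType) := PseudoPointedMetric.copy R[i] (R[i]^o).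
HB.instance Definition _ (R : realType) := GRing.ComAlgebra.copy R[i] (R[i]^o).
HB.instance Definition _ (R : realType) := Vector.copy R[i] (R[i]^o).
HB.instance Definition _ (R : realType) := NormedModule.copy R[i] (R[i]^o).
Local Open Scope classical_set_scope.

(** * Adjoints, unitaries and diagonalised matrices *)

Section Adjoint.
Variable R : realType.
Local Notation C := R[i].

Lemma adjmxE m n (A : 'M[C]_(m, n)) : adjmx A = (A ^t* )%sesqui.
Proof. by apply/matrixP=> i j; rewrite !mxE. Qed.

Lemma adjmxK m n (A : 'M[C]_(m, n)) : adjmx (adjmx A) = A.
Proof. by apply/matrixP=> i j; rewrite !mxE conjcK. Qed.

Lemma adjmxM m n p (A : 'M[C]_(m, n)) (B : 'M[C]_(n, p)) :
  adjmx (A *m B) = adjmx B *m adjmx A.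
Proof. by rewrite /adjmx map_mxM trmx_mul. Qed.

Lemma adjmxD m n (A B : 'M[C]_(m, n)) : adjmx (A + B) = adjmx A + adjmx B.
Proof. by apply/matrixP=> i j; rewrite !mxE rmorphD. Qed.

Lemma adjmx1 n : adjmx (1%:M : 'M[C]_n) = 1%:M.
Proof. by rewrite /adjmx map_mx1 trmx1. Qed.

Lemma adjmx_tens m n p q (A : 'M[C]_(m, n)) (B : 'M[C]_(p, q)) :
  adjmx (A *t B) = adjmx A *t adjmx B.
Proof. by rewrite /adjmx map_mxT trmx_tens. Qed.

Definition unitary n (W : 'M[C]_n) :=
  W *m adjmx W = 1%:M /\ adjmx W *m W = 1%:M.

Lemma unitary_adj n (W : 'M[C]_n) : unitary W -> unitary (adjmx W).
Proof. by move=> [W1 W2]; rewrite /unitary adjmxK. Qed.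

Lemma unitary_mul n (A B : 'M[C]_n) : unitary A -> unitary B -> unitary (A *m B).
Proof.
move=> [A1 A2] [B1 B2]; rewrite /unitary adjmxM; split.
  by rewrite mulmxA -[A *m B *m adjmx B]mulmxA B1 mulmx1 A1.
by rewrite mulmxA -[adjmx B *m adjmx A *m A]mulmxA A2 mulmx1 B2.
Qed.

Lemma tensmx11 m n : (1%:M : 'M[C]_m) *t (1%:M : 'M[C]_n) = 1%:M.
Proof.
apply/matrixP => x y.
case: (mxtens_indexP x) => i k; case: (mxtens_indexP y) => i' k'.
rewrite tensmxE !mxE (can_eq (@mxtens_indexK m n)) xpair_eqE.
by case: eqP => _; case: eqP => _; rewrite /= ?mulr1n ?mulr0n ?mulr0 ?mul0r ?mulr1.
Qed.

Lemma unitary_tens m n (A : 'M[C]_m) (B : 'M[C]_n) :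
  unitary A -> unitary B -> unitary (A *t B).
Proof.
move=> [A1 A2] [B1 B2].
by rewrite /unitary adjmx_tens !tensmx_mul A1 A2 B1 B2 tensmx11.
Qed.

Definition conjdiag n (W : 'M[C]_n) (d : 'I_n -> C) : 'M[C]_n :=
  W *m diag_mx (\row_l d l) *m adjmx W.

Lemma mulmx_diagE m n p (A : 'M[C]_(m, n)) (v : 'rV[C]_n) (B : 'M[C]_(n, p)) i j :
  (A *m diag_mx v *m B) i j = \sum_l A i l * v 0 l * B l j.
Proof. by rewrite mxE; apply: eq_bigr => l _; rewrite mul_mx_diag mxE. Qed.

Lemma conjdiag_const n (W : 'M[C]_n) (a : C) : unitary W ->
  conjdiag W (fun=> a) = a%:M.
Proof.
move=> [W1 _]; rewrite /conjdiag (_ : \row_l _ = const_mx a).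
  by rewrite diag_const_mx mul_mx_scalar -scalemxAl W1 scalemx1.
by apply/rowP => l; rewrite !mxE.
Qed.

Lemma scale_conjdiag n (W : 'M[C]_n) (d : 'I_n -> C) a :
  a *: conjdiag W d = conjdiag W (fun l => a * d l).
Proof.
apply/matrixP => i j; rewrite mxE !mulmx_diagE mulr_sumr.
by apply: eq_bigr => l _; rewrite !mxE; ring.
Qed.

Lemma adjmx_conjdiag n (W : 'M[C]_n) (d : 'I_n -> C) :
  adjmx (conjdiag W d) = conjdiag W (fun l => conjc (d l)).
Proof.
rewrite /conjdiag !adjmxM adjmxK mulmxA; congr (_ *m _ *m _).
by apply/matrixP => i j; rewrite !mxE rmorphMn eq_sym; case: eqP => // ->.
Qed.

Lemma mul_conjdiag n (W : 'M[C]_n) (d e : 'I_n -> C) : unitary W ->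
  conjdiag W d *m conjdiag W e = conjdiag W (fun l => d l * e l).
Proof.
move=> [_ W2]; rewrite /conjdiag !mulmxA -[_ *m adjmx W *m W]mulmxA W2 mulmx1.
rewrite -[W *m _ *m _]mulmxA mulmx_diag; congr (_ *m diag_mx _ *m _).
by apply/rowP => l; rewrite !mxE.
Qed.

Lemma conjdiagX n (W : 'M[C]_n) (d : 'I_n -> C) k : unitary W ->
  conjdiag W d ^+ k = conjdiag W (fun l => d l ^+ k).
Proof.
move=> Wu; elim: k => [|k IH].
  by rewrite expr0 conjdiag_const.
rewrite exprS IH -mulmxE mul_conjdiag //.
by congr (conjdiag _ _); apply: funext => l; rewrite exprS.
Qed.

Lemma unitary_conjdiag n (W : 'M[C]_n) (e : 'I_n -> C) : unitary W ->
  (forall l, e l * conjc (e l) = 1) -> unitary (conjdiag W e).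
Proof.
move=> Wu e1; rewrite /unitary adjmx_conjdiag !mul_conjdiag //.
rewrite (_ : (fun l => conjc (e l) * e l) = fun=> 1); last first.
  by apply: funext => l; rewrite mulrC e1.
by rewrite (_ : (fun l => e l * conjc (e l)) = fun=> 1) ?conjdiag_const //; apply: funext.
Qed.

Lemma mxtrace_conjdiag n (W : 'M[C]_n) (d : 'I_n -> C) : unitary W ->
  \tr (conjdiag W d) = \sum_l d l.
Proof.
move=> [_ W2]; rewrite mxtrace_mulC mulmxA W2 mul1mx mxtrace_diag.
by apply: eq_bigr => l _; rewrite mxE.
Qed.

Lemma tens_diag_mx m n (u : 'I_m -> C) (v : 'I_n -> C) :
  diag_mx (\row_l u l) *t diag_mx (\row_l v l)
  = diag_mx (\row_c (u (mxtens_unindex c).1 * v (mxtens_unindex c).2)) :> 'M[C]_(m * n).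
Proof.
apply/matrixP => x y.
case: (mxtens_indexP x) => i k; case: (mxtens_indexP y) => i' k'.
rewrite tensmxE !mxE (can_eq (@mxtens_indexK m n)) xpair_eqE mxtens_indexK /=.
by case: eqP => _; case: eqP => _; rewrite /= ?mulr1n ?mulr0n ?mulr0 ?mul0r.
Qed.

Lemma tens_conjdiag m n (A : 'M[C]_m) (B : 'M[C]_n) (a : 'I_m -> C) (b : 'I_n -> C) :
  conjdiag A a *t conjdiag B b
  = conjdiag (A *t B) (fun c => a (mxtens_unindex c).1 * b (mxtens_unindex c).2).
Proof. by rewrite /conjdiag -tens_diag_mx adjmx_tens !tensmx_mul. Qed.

(* A deterministic choice of eigenbasis, so that a Hamiltonian and its Gibbs
   state are diagonalised by the same unitary. *)
Definition eigenbasis n (A : 'M[C]_n) : 'M[C]_n := adjmx (spectralmx A).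
Definition eigenvalues n (A : 'M[C]_n) (k : 'I_n) : R :=
  complex.Re (spectral_diag A 0 k).

Lemma selfadjoint_eigen n (A : 'M[C]_n) : selfadjoint A ->
  unitary (eigenbasis A) /\
  A = conjdiag (eigenbasis A) (fun k => (eigenvalues A k)%:C).
Proof.
move=> hA.
have Aherm : A \is hermsymmx.
  by apply/is_hermitianmxP; rewrite expr0 scale1r -adjmxE; exact/esym.
have /hermitian_normalmx /orthomx_spectralP Aeq := Aherm.
have Pu := spectral_unitarymx A.
have dreal := hermitian_spectral_diag_real Aherm.
rewrite /eigenbasis /eigenvalues /conjdiag.
set P := spectralmx A in Aeq Pu *.
split.
  rewrite /unitary adjmxK; split; last by rewrite adjmxE; exact/unitarymxP.
  by rewrite adjmxE -(invmx_unitary Pu) (mulVmx (unitarymx_unit Pu)).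
have -> : \row_k (complex.Re (spectral_diag A 0 k))%:C = spectral_diag A.
  by apply/rowP => k; rewrite mxE; have /RRe_real := mxOverP dreal 0 k.
by rewrite adjmxK {1}Aeq (invmx_unitary Pu) -adjmxE.
Qed.

Lemma psdmx_conjdiag_ge0 n (rho P : 'M[C]_n) (p : 'I_n -> R) :
  psdmx rho -> unitary P -> rho = conjdiag P (fun l => (p l)%:C) ->
  forall i, 0 <= p i.
Proof.
move=> [_ rho_ge0] [_ P2] rhoE i.
have := rho_ge0 (col i P).
have -> : (adjmx (col i P) *m rho *m col i P) 0 0 = (adjmx P *m rho *m P) i i.
  rewrite !mxE; apply: eq_bigr => b _; rewrite !mxE; congr (_ * _).
  by apply: eq_bigr => a _; rewrite !mxE.
rewrite rhoE /conjdiag !mulmxA P2 mul1mx -mulmxA P2 mulmx1 !mxE eqxx mulr1n.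
by rewrite ler0c.
Qed.

End Adjoint.

(** * Matrix exponentials *)

Section Exponential.
Variable R : realType.
Local Notation C := R[i].

Lemma cvg_mx_entries m n (f : nat -> 'M[C]_(m, n)) (L : 'M[C]_(m, n)) :
  (forall i j, (fun k => f k i j) @ \oo --> L i j) -> f @ \oo --> L.
Proof.
move=> fL A [P /= P_nbhs sPA].
have fP : \forall k \near \oo, forall i j, P i j (f k i j).
  apply: filter_forall => i; apply: filter_forall => j; exact: fL _ _ _ (P_nbhs i j).
by apply: filterS fP => k Pk; apply: sPA.
Qed.

Lemma expmx_conjdiag n (W : 'M[C]_n) (d e : 'I_n -> C) : unitary W ->
  (forall l, series (fun m => (m`!%:R)^-1 * d l ^+ m) @ \oo --> e l) ->
  expmx (conjdiag W d) = conjdiag W e.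
Proof.
move=> Wu de; apply: cvg_lim => //; apply: cvg_mx_entries => i j.
have -> : (fun k => series (fun m => (m`!%:R)^-1 *: conjdiag W d ^+ m) k i j)
  = (fun k => \sum_l W i l * series (fun m => (m`!%:R)^-1 * d l ^+ m) k * adjmx W l j).
  apply: funext => k; rewrite !seriesEnat summxE.
  under eq_bigr => m _ do rewrite conjdiagX // mxE mulmx_diagE mulr_sumr.
  rewrite exchange_big /=; apply: eq_bigr => l _.
  rewrite mulr_sumr mulr_suml; apply: eq_bigr => m _; rewrite mxE; ring.
rewrite mulmx_diagE; apply: cvg_big => //; first exact: add_continuous.
by move=> l _; rewrite mxE; apply: cvgMr_tmp; apply: cvgMl_tmp; exact: de.
Qed.

Lemma cvg_real_complex (u : nat -> R) (a : R) :
  u @ \oo --> a -> (fun k => (u k)%:C) @ \oo --> a%:C.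
Proof.
move=> /cvgrPdist_lt ua; apply/cvgrPdist_lt => eps eps_gt0.
have epsE : eps = (complex.Re eps)%:C.
  case: eps eps_gt0 => a' b; rewrite ltcE /= => /andP[/eqP b0 _].
  by apply/eqP; rewrite eq_complex /= eqxx b0 eqxx.
have eps_gt0' : 0 < complex.Re eps by move: eps_gt0; rewrite epsE ltcR.
near=> k; rewrite -rmorphB /= normc_def /= expr0n /= addr0 sqrtr_sqr epsE ltcR.
by near: k; exact: ua.
Unshelve. all: by end_near. Qed.

Lemma series_expR (x : R) :
  series (fun m => (m`!%:R)^-1 * x%:C ^+ m) @ \oo --> (expR x)%:C.
Proof.
have -> : series (fun m => (m`!%:R)^-1 * x%:C ^+ m)
  = fun k => (series (exp_coeff x) k)%:C.
  apply: funext => k; rewrite !seriesEnat /= rmorph_sum; apply: eq_bigr => m _.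
  by rewrite /exp_coeff /= rmorphM fmorphV rmorphXn rmorph_nat mulrC.
apply: cvg_real_complex; exact: is_cvg_series_exp_coeff.
Qed.

Lemma expr_i m : ('i : C) ^+ m
  = (~~ odd m)%:R * (-1) ^+ m./2 + 'i * ((odd m)%:R * (-1) ^+ m./2).
Proof.
rewrite -{1}(odd_double_half m) exprD -mul2n exprM sqr_i.
by case: (odd m) => /=; rewrite ?expr1 ?expr0; ring.
Qed.

Lemma series_cis (y : R) :
  series (fun m => (m`!%:R)^-1 * ('i * y%:C) ^+ m) @ \oo
    --> (cos y)%:C + 'i * (sin y)%:C.
Proof.
have -> : series (fun m => (m`!%:R)^-1 * ('i * y%:C) ^+ m)
  = fun k => (series (cos_coeff y) k)%:C + 'i * (series (sin_coeff y) k)%:C.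
  apply: funext => k; rewrite !seriesEnat /= !rmorph_sum mulr_sumr -big_split /=.
  apply: eq_bigr => m _; rewrite /cos_coeff /sin_coeff /= exprMn expr_i.
  have half_pred : odd m -> m.-1./2 = m./2.
    by move=> om; rewrite -{1}(odd_double_half m) om add1n succnK doubleK.
  case om : (odd m) => /=.
    rewrite half_pred // !rmorphM !fmorphV !rmorphXn !rmorph_nat rmorphN rmorph1 /=; ring.
  rewrite !rmorphM !fmorphV !rmorphXn !rmorph_nat rmorphN rmorph1 /=; ring.
have cos_cvg : series (cos_coeff y) @ \oo --> cos y.
  by rewrite unlock; exact: is_cvg_series_cos_coeff.
have sin_cvg : series (sin_coeff y) @ \oo --> sin y.
  by rewrite unlock; exact: is_cvg_series_sin_coeff.
have isin_cvg : (fun k => 'i * (series (sin_coeff y) k)%:C) @ \oo --> 'i * (sin y)%:C.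
  by apply: cvgMl_tmp; exact: cvg_real_complex.
exact: (@cvgD _ _ _ _ _ _ _ _ _ (cvg_real_complex cos_cvg) isin_cvg).
Qed.

Lemma cis_mul_conj (y : R) :
  ((cos y)%:C + 'i * (sin y)%:C) * conjc ((cos y)%:C + 'i * (sin y)%:C) = 1.
Proof.
apply/eqP; rewrite eq_complex /=; apply/andP; split; apply/eqP; last by ring.
by rewrite -[in RHS](cos2Dsin2 y); ring.
Qed.

Lemma selfadjoint_generator dS dE (HS : 'M[C]_dS) (HE : 'M[C]_dE)
    (V : 'M[C]_(dS * dE)) :
  selfadjoint HS -> selfadjoint HE -> selfadjoint V ->
  selfadjoint (HS *t (1%:M : 'M[C]_dE) + (1%:M : 'M[C]_dS) *t HE + V).
Proof. by move=> hS hE hV; rewrite /selfadjoint !adjmxD !adjmx_tens !adjmx1 hS hE hV. Qed.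

Lemma Uint_unitary dS dE (HS : 'M[C]_dS) (HE : 'M[C]_dE) (V : 'M[C]_(dS * dE)) tau :
  selfadjoint HS -> selfadjoint HE -> selfadjoint V -> unitary (Uint HS HE V tau).
Proof.
move=> hS hE hV; have [Wu KE] := selfadjoint_eigen (selfadjoint_generator hS hE hV).
set W := eigenbasis _ in Wu KE; set d := eigenvalues _ in KE.
rewrite /Uint KE scale_conjdiag.
have -> : (fun l => - ('i * tau%:C) * (d l)%:C) = fun l => 'i * (- (tau * d l))%:C.
  by apply: funext => l; rewrite rmorphN rmorphM /=; ring.
rewrite (expmx_conjdiag (e := fun l => (cos (- (tau * d l)))%:C
                                     + 'i * (sin (- (tau * d l)))%:C)) //.
  by apply: unitary_conjdiag => // l; exact: cis_mul_conj.
by move=> l; exact: series_cis.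
Qed.

End Exponential.

Section Gibbs.
Variable R : realType.
Local Notation C := R[i].

Definition gibbs_weight n (beta : R) (h : 'I_n -> R) (k : 'I_n) : R :=
  expR (- beta * h k) / \sum_l expR (- beta * h l).

Lemma partition_gt0 n (beta : R) (h : 'I_n -> R) : (0 < n)%N ->
  0 < \sum_l expR (- beta * h l).
Proof.
move=> n_gt0; rewrite (bigD1 (Ordinal n_gt0)) //= ltr_pwDl ?expR_gt0 //.
by apply: sumr_ge0 => l _; exact/ltW/expR_gt0.
Qed.

Lemma gibbs_weight_gt0 n beta (h : 'I_n -> R) k : 0 < gibbs_weight beta h k.
Proof. by rewrite divr_gt0 ?expR_gt0 ?partition_gt0 // (leq_ltn_trans _ (ltn_ord k)). Qed.

Lemma gibbs_weight_sum1 n beta (h : 'I_n -> R) : (0 < n)%N ->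
  \sum_k gibbs_weight beta h k = 1.
Proof. by move=> n_gt0; rewrite -mulr_suml divff // gt_eqF ?partition_gt0. Qed.

Lemma ln_gibbs_weight n beta (h : 'I_n -> R) k :
  ln (gibbs_weight beta h k) = - beta * h k - ln (\sum_l expR (- beta * h l)).
Proof.
rewrite ln_div ?expRK // posrE ?expR_gt0 ?partition_gt0 //.
exact: leq_ltn_trans _ (ltn_ord k).
Qed.

Lemma gibbs_eigen n beta (H : 'M[C]_n) : selfadjoint H ->
  gibbs beta H
  = conjdiag (eigenbasis H) (fun k => (gibbs_weight beta (eigenvalues H) k)%:C).
Proof.
move=> /selfadjoint_eigen [Wu HE].
have expE : expmx (- beta%:C *: H)
    = conjdiag (eigenbasis H) (fun k => (expR (- beta * eigenvalues H k))%:C).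
  rewrite {1}HE scale_conjdiag; apply: expmx_conjdiag => // k.
  by rewrite -rmorphN -rmorphM; exact: series_expR.
rewrite /gibbs expE mxtrace_conjdiag // scale_conjdiag -rmorph_sum -fmorphV.
by congr conjdiag; apply: funext => k; rewrite -rmorphM mulrC.
Qed.

Lemma mxtrace_gibbs n beta (H : 'M[C]_n) : (0 < n)%N -> selfadjoint H ->
  \tr (gibbs beta H) = 1.
Proof.
move=> n_gt0 hH; have [Wu _] := selfadjoint_eigen hH.
by rewrite gibbs_eigen // mxtrace_conjdiag // -rmorph_sum gibbs_weight_sum1.
Qed.

End Gibbs.

Lemma sum_mxtens_index (V : nmodType) m n (F : 'I_(m * n) -> V) :
  \sum_c F c = \sum_(i < m) \sum_(k < n) F (mxtens_index (i, k)).
Proof.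
rewrite pair_big /= (reindex (@mxtens_index m n)) /=; first by apply: eq_bigr => -[].
by exists (@mxtens_unindex m n) => x _; rewrite (mxtens_indexK, mxtens_unindexK).
Qed.

Section PartialTrace.
Variable R : realType.
Local Notation C := R[i].

Lemma mxtrace_mul_ptrace2 m n (A : 'M[C]_m) (X : 'M[C]_(m * n)) :
  \tr (A *m ptrace2 X) = \tr ((A *t (1%:M : 'M[C]_n)) *m X).
Proof.
rewrite /mxtrace sum_mxtens_index; apply: eq_bigr => i _.
rewrite !mxE; under eq_bigr do rewrite mxE mulr_sumr.
rewrite exchange_big /=; apply: eq_bigr => k _.
rewrite !mxE sum_mxtens_index; apply: eq_bigr => i' _.
rewrite (bigD1 k) //= big1 ?addr0 => [|k' k'k]; first by rewrite tensmxE !mxE eqxx mulr1.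
by rewrite tensmxE !mxE eq_sym (negbTE k'k) mulr0 mul0r.
Qed.

Lemma ptrace2_tens m n (A : 'M[C]_m) (B : 'M[C]_n) : ptrace2 (A *t B) = \tr B *: A.
Proof.
apply/matrixP => i i'; rewrite !mxE /mxtrace mulr_suml.
by apply: eq_bigr => l _; rewrite tensmxE mulrC.
Qed.

Lemma ptrace2_conjE m n (P : 'M[C]_m) (W : 'M[C]_n) (X : 'M[C]_(m * n)) i i' :
  unitary W ->
  (adjmx P *m ptrace2 X *m P) i i'
  = \sum_k (adjmx (P *t W) *m X *m (P *t W)) (mxtens_index (i, k)) (mxtens_index (i', k)).
Proof.
move=> [W1 _].
have WW l2 l1 : \sum_k W l2 k * conjc (W l1 k) = (l2 == l1)%:R.
  have := congr1 (fun Y : 'M[C]_n => Y l2 l1) W1; rewrite !mxE => <-.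
  by apply: eq_bigr => k _; rewrite !mxE.
rewrite mxE; under eq_bigr do rewrite mxE mulr_suml.
under [RHS]eq_bigr do rewrite mxE.
rewrite [RHS]exchange_big /= sum_mxtens_index; apply: eq_bigr => b _.
under eq_bigr do rewrite !mxE mulr_sumr mulr_suml.
rewrite exchange_big /=; apply: eq_bigr => l2 _.
under [RHS]eq_bigr do rewrite mxE sum_mxtens_index mulr_suml.
rewrite [RHS]exchange_big /=; apply: eq_bigr => a _.
under [RHS]eq_bigr do rewrite mulr_suml.
rewrite [RHS]exchange_big /=.
have E l1 x : \sum_k adjmx (P *t W) (mxtens_index (i, k)) (mxtens_index (a, l1)) * x
     * (P *t W) (mxtens_index (b, l2)) (mxtens_index (i', k))
    = conjc (P a i) * x * P b i' * (l2 == l1)%:R.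
  rewrite -WW mulr_sumr; apply: eq_bigr => k _.
  by rewrite /adjmx mxE [map_mx _ _ _ _]mxE !tensmxE rmorphM; ring.
rewrite (bigD1 l2) //= [X in _ = _ + X]big1 ?addr0 => [|l1 l1l2].
  by rewrite E eqxx mulr1.
by rewrite E eq_sym (negbTE l1l2) mulr0.
Qed.

End PartialTrace.

(** * A classical relative entropy *)

Section RelativeEntropy.
Variable R : realType.

Lemma ln_le_subr1 (x : R) : 0 < x -> ln x <= x - 1.
Proof. by move=> x_gt0; have := expR_ge1Dx (ln x); rewrite lnK ?posrE //; lra. Qed.

Lemma ln_lt_subr1 (x : R) : 0 < x -> x != 1 -> ln x < x - 1.
Proof.
move=> x_gt0 x_neq1; have := @expR_gt1Dx _ (ln x).
by rewrite ln_eq0 // x_neq1 lnK ?posrE // => /(_ isT); lra.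
Qed.

Definition kl_term (s t : R) : R := s * (ln s - ln t) - s + t.

Lemma kl_termE s t : 0 < s -> 0 < t -> kl_term s t = s * (t / s - 1 - ln (t / s)).
Proof.
by move=> s_gt0 t_gt0; rewrite /kl_term ln_div ?posrE //; field; rewrite gt_eqF.
Qed.

Lemma kl_term_ge0 s t : 0 <= s -> 0 < t -> 0 <= kl_term s t.
Proof.
rewrite le_eqVlt => /predU1P[<- t_gt0|s_gt0 t_gt0].
  by rewrite /kl_term !mul0r subr0 add0r ltW.
rewrite kl_termE //; apply: mulr_ge0; first exact: ltW.
by have := ln_le_subr1 (divr_gt0 t_gt0 s_gt0); lra.
Qed.

Lemma kl_term_eq0 s t : 0 <= s -> 0 < t -> kl_term s t = 0 -> s = t.
Proof.
rewrite le_eqVlt => /predU1P[<- t_gt0|s_gt0 t_gt0].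
  by rewrite /kl_term !mul0r subr0 add0r => t0; move: t_gt0; rewrite t0 ltxx.
rewrite kl_termE // => /eqP; rewrite mulf_eq0 gt_eqF //= => /eqP kl0.
have [ts1|ts_neq1] := eqVneq (t / s) 1; first by apply/esym/(divr1_eq ts1).
by have := ln_lt_subr1 (divr_gt0 t_gt0 s_gt0) ts_neq1; lra.
Qed.

Definition mixing n (g : 'I_n -> 'I_n -> R) (b : 'I_n -> R) (c : 'I_n) : R :=
  \sum_a g c a * b a.

(* If [b] are the eigenvalues of a state B and [g c a = |<c|U|a>|^2] in an
   eigenbasis of B, then [relent g b] is the relative entropy S(U B U^* || B). *)
Definition relent n (g : 'I_n -> 'I_n -> R) (b : 'I_n -> R) : R :=
  \sum_c \sum_a g c a * kl_term (b a) (b c).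

Section DoublyStochastic.
Variables (n : nat) (g : 'I_n -> 'I_n -> R) (b : 'I_n -> R).
Hypothesis g_ge0 : forall c a, 0 <= g c a.
Hypothesis g_row1 : forall c, \sum_a g c a = 1.
Hypothesis g_col1 : forall a, \sum_c g c a = 1.

Lemma sum_mixing : \sum_c mixing g b c = \sum_c b c.
Proof.
rewrite /mixing exchange_big /=; apply: eq_bigr => a _.
by rewrite -mulr_suml g_col1 mul1r.
Qed.

Lemma relentE : relent g b = \sum_c (b c - mixing g b c) * ln (b c).
Proof.
have termE c a : g c a * kl_term (b a) (b c) = g c a * (b a * ln (b a) - b a)
    + g c a * b c - g c a * b a * ln (b c) by rewrite /kl_term; ring.
rewrite /relent; under eq_bigr do under eq_bigr do rewrite termE.
under eq_bigr do rewrite sumrB big_split /= -mulr_suml g_row1 mul1r -mulr_suml.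
rewrite sumrB big_split /= exchange_big /=.
under eq_bigr do rewrite -mulr_suml g_col1 mul1r.
rewrite sumrB [X in _ = X](eq_bigr (fun c => b c * ln (b c) - mixing g b c * ln (b c))).
  by rewrite sumrB /mixing; ring.
by move=> c _; ring.
Qed.

Hypothesis b_ge0 : forall c, 0 <= b c.
Hypothesis mixing_supp : forall c, b c = 0 -> mixing g b c = 0.

Lemma mixing_supp_term c a : b c = 0 -> g c a * b a = 0.
Proof.
move=> /mixing_supp bc0.
by apply: (psumr_eq0P _ bc0) => // a' _; rewrite mulr_ge0.
Qed.

Lemma relent_term_ge0 c a : 0 <= g c a * kl_term (b a) (b c).
Proof.
have [bc0|bc_neq0] := eqVneq (b c) 0.
  by rewrite /kl_term bc0 addr0 mulrBr mulrA mixing_supp_term // !mul0r subr0.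
by rewrite mulr_ge0 ?kl_term_ge0 // lt_def bc_neq0 b_ge0.
Qed.

Lemma relent_ge0 : 0 <= relent g b.
Proof. by apply: sumr_ge0 => c _; apply: sumr_ge0 => a _; exact: relent_term_ge0. Qed.

Lemma relent_eq0 : relent g b = 0 -> forall c a, 0 < g c a -> b a = b c.
Proof.
move=> rel0 c a g_gt0.
have row0 := psumr_eq0P (fun c _ => sumr_ge0 _ (fun a _ => relent_term_ge0 c a)) rel0.
have term0 := psumr_eq0P (fun a _ => relent_term_ge0 c a) (row0 c isT).
have /eqP := term0 a isT.
have [bc0|bc_neq0] := eqVneq (b c) 0.
  move=> _; have /eqP := mixing_supp_term a bc0.
  by rewrite mulf_eq0 gt_eqF //= bc0 => /eqP.
rewrite mulf_eq0 gt_eqF //= => /eqP; apply: kl_term_eq0 => //.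
by rewrite lt_def bc_neq0 b_ge0.
Qed.

End DoublyStochastic.
End RelativeEntropy.

Section EntropyBalance.
Local Unset Implicit Arguments.
Variables (R : realType) (M dS : nat) (dE : 'I_M -> nat).
Variables (p : 'I_dS -> R) (beta : 'I_M -> R) (h : forall j, 'I_(dE j) -> R).
Variable g : forall j : 'I_M, 'I_(dS * dE j) -> 'I_(dS * dE j) -> R.
Hypothesis p_ge0 : forall i, 0 <= p i.
Hypothesis dE_gt0 : forall j, (0 < dE j)%N.
Hypothesis g_ge0 : forall j c a, 0 <= g j c a.
Hypothesis g_row1 : forall j c, \sum_a g j c a = 1.
Hypothesis g_col1 : forall j a, \sum_c g j c a = 1.

Let b j (c : 'I_(dS * dE j)) : R :=
  p (mxtens_unindex c).1 * gibbs_weight (beta j) (h j) (mxtens_unindex c).2.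

Hypothesis balance : forall i,
  \sum_j \sum_k mixing (g j) (b j) (mxtens_index (i, k)) = M%:R * p i.

Let b_ge0 j c : 0 <= b j c.
Proof. exact/mulr_ge0/ltW/gibbs_weight_gt0. Qed.

Let sum_b_fiber i : \sum_j \sum_k b j (mxtens_index (i, k)) = M%:R * p i.
Proof.
under eq_bigr do under eq_bigr do rewrite /b mxtens_indexK /=.
under eq_bigr do rewrite -mulr_sumr gibbs_weight_sum1 // mulr1.
by rewrite sumr_const card_ord mulr_natl.
Qed.

Let mixing_supp j c : b j c = 0 -> mixing (g j) (b j) c = 0.
Proof.
move=> /eqP; rewrite /b mulf_eq0 (gt_eqF (gibbs_weight_gt0 _ _ _)) orbF => /eqP pc0.
have mixing_ge0 j' c' : 0 <= mixing (g j') (b j') c'.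
  by apply: sumr_ge0 => a _; rewrite mulr_ge0.
have fiber0 := balance (mxtens_unindex c).1; rewrite pc0 mulr0 in fiber0.
have reservoir0 := psumr_eq0P (fun j' _ => sumr_ge0 _ (fun k _ => mixing_ge0 j' _)) fiber0.
have entry0 := psumr_eq0P (fun k _ => mixing_ge0 j _) (reservoir0 j isT).
by have := entry0 (mxtens_unindex c).2 isT; rewrite -surjective_pairing mxtens_unindexK.
Qed.

(* Where [p] vanishes so do [b] and [mixing], hence the convention [ln 0 = 0]
   is harmless when splitting [ln b] into [ln p + ln gibbs_weight]. *)
Let relent_split j : relent (g j) (b j)
  = \sum_c (b j c - mixing (g j) (b j) c) * ln (p (mxtens_unindex c).1)
    + beta j * \sum_c (mixing (g j) (b j) c - b j c) * h j (mxtens_unindex c).2.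
Proof.
set Z := \sum_l expR (- beta j * h j l).
have termE c : (b j c - mixing (g j) (b j) c) * ln (b j c)
    = (b j c - mixing (g j) (b j) c) * ln (p (mxtens_unindex c).1)
      + beta j * ((mixing (g j) (b j) c - b j c) * h j (mxtens_unindex c).2)
      + ln Z * (mixing (g j) (b j) c - b j c).
  have [pc0|pc_neq0] := eqVneq (p (mxtens_unindex c).1) 0.
    have bc0 : b j c = 0 by rewrite /b pc0 mul0r.
    by rewrite mixing_supp // bc0; ring.
  rewrite /b lnM ?posrE ?gibbs_weight_gt0 ?ln_gibbs_weight -/Z //; first ring.
  by rewrite lt_def pc_neq0 p_ge0.
rewrite (relentE _ (g_row1 j) (g_col1 j)); under eq_bigr do rewrite termE.
by rewrite !big_split /= -!mulr_sumr sumrB (sum_mixing _ (g_col1 j)) subrr mulr0 addr0.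
Qed.

Let relent_p_part :
  \sum_j \sum_c (b j c - mixing (g j) (b j) c) * ln (p (mxtens_unindex c).1) = 0.
Proof.
under eq_bigr do rewrite sum_mxtens_index.
rewrite exchange_big big1 // => i _.
under eq_bigr do under eq_bigr do rewrite mxtens_indexK /=.
under eq_bigr do rewrite -mulr_suml sumrB.
by rewrite -mulr_suml sumrB balance sum_b_fiber subrr mul0r.
Qed.

Lemma sum_relent : \sum_j relent (g j) (b j)
  = \sum_j beta j * \sum_c (mixing (g j) (b j) c - b j c) * h j (mxtens_unindex c).2.
Proof.
under eq_bigr do rewrite relent_split.
by rewrite big_split /= relent_p_part add0r.
Qed.

Lemma zero_heat_balance_weights_eq :
  \sum_j beta j * \sum_c (mixing (g j) (b j) c - b j c) * h j (mxtens_unindex c).2 = 0 ->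
  forall j c a, 0 < g j c a -> b j a = b j c.
Proof.
rewrite -sum_relent => sum0 j.
have relent0 := psumr_eq0P (fun j _ => relent_ge0 (g_ge0 j) (b_ge0 j) (mixing_supp j)) sum0.
exact: relent_eq0 (g_ge0 j) (b_ge0 j) (mixing_supp j) (relent0 j isT).
Qed.

End EntropyBalance.

(** * Transition probabilities of a unitary *)

Section Transitions.
Variable R : realType.
Local Notation C := R[i].

Definition sqnormc (z : C) : R := complex.Re z ^+ 2 + complex.Im z ^+ 2.

Lemma mulc_conj (z : C) : z * conjc z = (sqnormc z)%:C.
Proof.
case: z => a b; apply/eqP; rewrite /sqnormc eq_complex /=.
by apply/andP; split; apply/eqP; ring.
Qed.

Lemma sqnormc_ge0 (z : C) : 0 <= sqnormc z.
Proof. by rewrite addr_ge0 // sqr_ge0. Qed.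

Lemma sqnormc_eq0 (z : C) : sqnormc z = 0 -> z = 0.
Proof.
case: z => a b /eqP; rewrite /sqnormc /= paddr_eq0 ?sqr_ge0 // !sqrf_eq0.
by case/andP => /eqP -> /eqP ->.
Qed.

Lemma unitary_sqnormc_sum n (G : 'M[C]_n) : unitary G ->
  (forall c, \sum_a sqnormc (G c a) = 1) /\ (forall a, \sum_c sqnormc (G c a) = 1).
Proof.
move=> [G1 G2]; split=> [c|a].
  have := congr1 (fun X : 'M[C]_n => X c c) G1; rewrite !mxE eqxx mulr1n.
  by under eq_bigr do rewrite !mxE mulc_conj; rewrite -rmorph_sum => /complexI.
have := congr1 (fun X : 'M[C]_n => X a a) G2; rewrite !mxE eqxx mulr1n.
by under eq_bigr do rewrite !mxE mulrC mulc_conj; rewrite -rmorph_sum => /complexI.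
Qed.

Lemma conjdiag_diagE n (G : 'M[C]_n) (b : 'I_n -> R) c :
  conjdiag G (fun a => (b a)%:C) c c = (\sum_a sqnormc (G c a) * b a)%:C.
Proof.
rewrite mulmx_diagE rmorph_sum; apply: eq_bigr => a _.
by rewrite !mxE rmorphM /= -mulc_conj; ring.
Qed.

Definition energy_change n (U B X : 'M[C]_n) : C :=
  \tr (U *m B *m adjmx U *m X) - \tr (B *m X).

Lemma mxtrace_flux dS dE (HS : 'M[C]_dS) (HE : 'M[C]_dE) (V : 'M[C]_(dS * dE))
    (tau beta T : R) (rho : 'M[C]_dS) :
  \tr (rho *m flux HS HE V tau beta T)
  = - (T%:C)^-1 * energy_change (Uint HS HE V tau) (rho *t gibbs beta HE)
                                ((1%:M : 'M[C]_dS) *t HE).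
Proof.
rewrite /flux -scalemxAr mxtraceZ mxtrace_mul_ptrace2; congr (_ * _).
rewrite mulmxA tensmx_mul mulmx1 mul1mx mulmxBr raddfB /energy_change.
congr (_ - _); set U := Uint _ _ _ _; set B := rho *t _; set X := 1%:M *t _.
transitivity (\tr (U *m (B *m adjmx U *m X))); last by rewrite !mulmxA.
by rewrite [RHS]mxtrace_mulC !mulmxA.
Qed.

Definition transition_prob n (Vb U : 'M[C]_n) (c a : 'I_n) : R :=
  sqnormc ((adjmx Vb *m U *m Vb) c a).

Lemma transition_prob_ge0 n (Vb U : 'M[C]_n) c a : 0 <= transition_prob Vb U c a.
Proof. exact: sqnormc_ge0. Qed.

Lemma transition_prob_sum1 n (Vb U : 'M[C]_n) : unitary Vb -> unitary U ->
  (forall c, \sum_a transition_prob Vb U c a = 1) /\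
  (forall a, \sum_c transition_prob Vb U c a = 1).
Proof.
move=> Vbu Uu.
exact: unitary_sqnormc_sum (unitary_mul (unitary_mul (unitary_adj Vbu) Uu) Vbu).
Qed.

Lemma conjdiagK n (Vb : 'M[C]_n) (d : 'I_n -> C) : unitary Vb ->
  adjmx Vb *m conjdiag Vb d *m Vb = diag_mx (\row_l d l).
Proof. by move=> [_ V2]; rewrite /conjdiag !mulmxA V2 mul1mx -mulmxA V2 mulmx1. Qed.

Lemma evolved_conjdiagE n (Vb U : 'M[C]_n) (b : 'I_n -> R) c :
  (adjmx Vb *m (U *m conjdiag Vb (fun a => (b a)%:C) *m adjmx U) *m Vb) c c
  = (mixing (transition_prob Vb U) b c)%:C.
Proof.
rewrite (_ : _ *m _ *m Vb = conjdiag (adjmx Vb *m U *m Vb) (fun a => (b a)%:C)).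
  exact: conjdiag_diagE.
by rewrite /conjdiag !adjmxM adjmxK !mulmxA.
Qed.

Lemma mxtrace_mul_conjdiag n (X Vb : 'M[C]_n) (d : 'I_n -> C) :
  \tr (X *m conjdiag Vb d) = \sum_c (adjmx Vb *m X *m Vb) c c * d c.
Proof.
rewrite /conjdiag mulmxA mxtrace_mulC !mulmxA.
by apply: eq_bigr => c _; rewrite mul_mx_diag !mxE.
Qed.

Lemma energy_change_conjdiag n (Vb U : 'M[C]_n) (b e : 'I_n -> R) : unitary Vb ->
  energy_change U (conjdiag Vb (fun c => (b c)%:C)) (conjdiag Vb (fun c => (e c)%:C))
  = (\sum_c (mixing (transition_prob Vb U) b c - b c) * e c)%:C.
Proof.
move=> Vbu; rewrite /energy_change !mxtrace_mul_conjdiag conjdiagK //.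
under eq_bigr do rewrite evolved_conjdiagE.
under [X in _ - X]eq_bigr do rewrite mxE mxE eqxx mulr1n.
by rewrite -sumrB rmorph_sum; apply: eq_bigr => c _; rewrite rmorphM rmorphB mulrBl.
Qed.

Lemma ptrace2_evolved_conjdiagE m n (P : 'M[C]_m) (W : 'M[C]_n) (U : 'M[C]_(m * n))
    (b : 'I_(m * n) -> R) i : unitary W ->
  (adjmx P *m ptrace2 (U *m conjdiag (P *t W) (fun a => (b a)%:C) *m adjmx U) *m P) i i
  = (\sum_k mixing (transition_prob (P *t W) U) b (mxtens_index (i, k)))%:C.
Proof.
move=> Wu; rewrite (ptrace2_conjE _ _ _ _ Wu) rmorph_sum.
by apply: eq_bigr => k _; exact: evolved_conjdiagE.
Qed.

Lemma diag_mx_commute n (G : 'M[C]_n) (b : 'I_n -> R) :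
  (forall c a, 0 < sqnormc (G c a) -> b a = b c) ->
  G *m diag_mx (\row_a (b a)%:C) = diag_mx (\row_a (b a)%:C) *m G.
Proof.
move=> Gb; apply/matrixP => c a; rewrite mul_mx_diag mul_diag_mx !mxE.
have [->|Gca_neq0] := eqVneq (G c a) 0; first by rewrite mulr0 mul0r.
rewrite (Gb c a) 1?mulrC // lt_def sqnormc_ge0 andbT.
by apply: contra Gca_neq0 => /eqP /sqnormc_eq0 ->.
Qed.

Lemma commute_conjdiag n (Vb U : 'M[C]_n) (b : 'I_n -> R) : unitary Vb -> unitary U ->
  (forall c a, 0 < transition_prob Vb U c a -> b a = b c) ->
  U *m conjdiag Vb (fun c => (b c)%:C) *m adjmx U = conjdiag Vb (fun c => (b c)%:C).
Proof.
move=> Vbu Uu Gb; have [V1 V2] := Vbu.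
have Gu : unitary (adjmx Vb *m U *m Vb).
  by apply: unitary_mul; first exact: unitary_mul (unitary_adj _) _.
have GD := diag_mx_commute (G := adjmx Vb *m U *m Vb) Gb.
have UE : U = Vb *m (adjmx Vb *m U *m Vb) *m adjmx Vb.
  by rewrite !mulmxA V1 mul1mx -mulmxA V1 mulmx1.
move: Gu GD UE; set G := adjmx Vb *m U *m Vb; clearbody G => -[G1 _] GD ->.
rewrite /conjdiag !adjmxM adjmxK !mulmxA.
rewrite -[Vb *m G *m adjmx Vb *m Vb]mulmxA V2 mulmx1.
rewrite -[Vb *m G *m _ *m adjmx Vb *m Vb]mulmxA V2 mulmx1.
rewrite -[Vb *m G *m _]mulmxA GD mulmxA.
by rewrite -[_ *m G *m adjmx G]mulmxA G1 mulmx1.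
Qed.

End Transitions.

Section ZeroEntropyProduction.
Local Unset Implicit Arguments.
Variables (R : realType) (M dS : nat) (dE : 'I_M -> nat).
Variables (HE : forall j, 'M[R[i]]_(dE j)) (beta : 'I_M -> R).
Variables (U : forall j, 'M[R[i]]_(dS * dE j)) (rho : 'M[R[i]]_dS).
Hypothesis dE_gt0 : forall j, (0 < dE j)%N.
Hypothesis HE_selfadjoint : forall j, selfadjoint (HE j).
Hypothesis U_unitary : forall j, unitary (U j).
Hypothesis rho_psd : psdmx rho.

Let B j := rho *t gibbs (beta j) (HE j).

Hypothesis balance :
  \sum_j ptrace2 (U j *m B j *m adjmx (U j)) = M%:R *: rho.
Hypothesis heat0 :
  \sum_j (beta j)%:C * energy_change (U j) (B j) ((1%:M : 'M[R[i]]_dS) *t HE j) = 0.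

Let P := eigenbasis rho.
Let p := eigenvalues rho.
Let W j := eigenbasis (HE j).
Let h j := eigenvalues (HE j).
Let Vb j := P *t W j.
Let b j (c : 'I_(dS * dE j)) : R :=
  p (mxtens_unindex c).1 * gibbs_weight (beta j) (h j) (mxtens_unindex c).2.
Let g j := transition_prob (Vb j) (U j).

Let P_unitary : unitary P. Proof. exact: (selfadjoint_eigen rho_psd.1).1. Qed.
Let W_unitary j : unitary (W j).
Proof. exact: (selfadjoint_eigen (HE_selfadjoint j)).1. Qed.
Let Vb_unitary j : unitary (Vb j). Proof. exact: unitary_tens P_unitary (W_unitary j). Qed.

Let BE j : B j = conjdiag (Vb j) (fun c => (b j c)%:C).
Proof.
rewrite /B {1}(selfadjoint_eigen rho_psd.1).2 gibbs_eigen // tens_conjdiag.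
by congr (conjdiag _ _); apply: funext => c; rewrite [RHS]rmorphM.
Qed.

Let HE_tensE j : (1%:M : 'M[R[i]]_dS) *t HE j
  = conjdiag (Vb j) (fun c => (h j (mxtens_unindex c).2)%:C).
Proof.
rewrite -(conjdiag_const 1 P_unitary) {1}(selfadjoint_eigen (HE_selfadjoint j)).2.
by rewrite tens_conjdiag; congr (conjdiag _ _); apply: funext => c; rewrite mul1r.
Qed.

Let balance_diag i :
  \sum_j \sum_k mixing (g j) (b j) (mxtens_index (i, k)) = M%:R * p i.
Proof.
apply: complexI; rewrite rmorph_sum rmorphM rmorph_nat.
have := congr1 (fun X => (adjmx P *m X *m P) i i) balance.
rewrite /= mulmx_sumr mulmx_suml summxE -scalemxAr -scalemxAl mxE.
rewrite (selfadjoint_eigen rho_psd.1).2 conjdiagK // 2![in X in _ = X]mxE eqxx mulr1n => <-.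
by apply: eq_bigr => j _; rewrite BE ptrace2_evolved_conjdiagE.
Qed.

Let heat_diag : \sum_j beta j
    * \sum_c (mixing (g j) (b j) c - b j c) * h j (mxtens_unindex c).2 = 0.
Proof.
apply: complexI; rewrite rmorph_sum -[RHS]heat0; apply: eq_bigr => j _.
by rewrite BE HE_tensE energy_change_conjdiag // rmorphM.
Qed.

Lemma zero_entropy_production_stationary j : U j *m B j *m adjmx (U j) = B j.
Proof.
have p_ge0 := psdmx_conjdiag_ge0 rho_psd P_unitary (selfadjoint_eigen rho_psd.1).2.
rewrite BE; apply: commute_conjdiag => //.
exact: (zero_heat_balance_weights_eq R M dS dE p beta h g p_ge0 dE_gt0
  (fun j' => transition_prob_ge0 _ _)
  (fun j' => (transition_prob_sum1 (Vb_unitary j') (U_unitary j')).1)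
  (fun j' => (transition_prob_sum1 (Vb_unitary j') (U_unitary j')).2)
  balance_diag heat_diag j).
Qed.

End ZeroEntropyProduction.

Theorem mainTheorem9 (R : realType) (M dS : nat) (dE : 'I_M -> nat)
  (HS : 'M[R[i]]_dS) (HE : forall j, 'M[R[i]]_(dE j))
  (V : forall j, 'M[R[i]]_(dS * dE j)) (tau beta : 'I_M -> R)
  (rho : 'M[R[i]]_dS) :
  (0 < M)%N -> (0 < dS)%N -> (forall j, 0 < dE j)%N ->
  selfadjoint HS -> (forall j, selfadjoint (HE j)) ->
  (forall j, selfadjoint (V j)) -> (forall j, 0 < tau j) ->
  (* (ER ra): L_ra is primitive for some choice of inverse temperatures *)
  (exists beta' : 'I_M -> R, primitive (Lra HS HE V tau beta')) ->
  (* rho is the (unique) invariant state rho^ra_+ of L_ra *)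
  density rho -> Lra HS HE V tau beta rho = rho ->
  let T := \sum_(j < M) tau j in
  let sigma := - \sum_(j < M) (beta j)%:C
                   * \tr (rho *m flux HS (HE j) (V j) (tau j) (beta j) T) in
  let U j := Uint HS (HE j) (V j) (tau j) in
  (sigma = 0 <->
     (forall j, U j *m (rho *t gibbs (beta j) (HE j)) *m adjmx (U j)
                = rho *t gibbs (beta j) (HE j))) /\
  ((forall j, U j *m (rho *t gibbs (beta j) (HE j)) *m adjmx (U j)
                = rho *t gibbs (beta j) (HE j)) ->
   forall j, Lrep HS (HE j) (V j) (tau j) (beta j) rho = rho).
Proof.
move=> M_gt0 _ dE_gt0 hHS hHE hV tau_gt0 _ [rho_psd _] rho_fixed T sigma U.
have U_unitary j : unitary (U j) by exact: Uint_unitary.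
have T_gt0 : 0 < T.
  rewrite /T (bigD1 (Ordinal M_gt0)) //= ltr_pwDl ?tau_gt0 //.
  by apply: sumr_ge0 => j _; exact/ltW.
have sigmaE : sigma = (T^-1)%:C * \sum_j (beta j)%:C
    * energy_change (U j) (rho *t gibbs (beta j) (HE j)) (1%:M *t HE j).
  rewrite /sigma mulr_sumr -sumrN; apply: eq_bigr => j _.
  by rewrite mxtrace_flux fmorphV; ring.
split; [split=> [sigma0|stationary] | move=> stationary j].
- apply: zero_entropy_production_stationary => //.
    move: rho_fixed; rewrite /Lra => {2}<-.
    by rewrite scalerA divff ?scale1r // pnatr_eq0 -lt0n.
  move: sigma0; rewrite sigmaE => /(congr1 ( *%R T%:C)).
  by rewrite mulrA -rmorphM divff ?gt_eqF // mul1r mulr0.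
- by rewrite sigmaE big1 ?mulr0 // => j _; rewrite /energy_change stationary subrr mulr0.
- by rewrite /Lrep -/(U j) stationary ptrace2_tens mxtrace_gibbs // scale1r.
Qed.
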